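(* Let $\beta>0$ and let $N$ be a nonnegative integer random variable with $P(N\ge n)=1-e^{-\beta/n}$ for all integers $n\ge1$. Let $0<p<1$. For the one-dimensional oriented percolation with random range with bond parameter $p$, if $\beta>1/p$ then $\theta(p,0)=P(0\to\infty)>0$.
   Context: One-dimensional percolation with random range (equivalently, the APRR model with $q=0$, restricted to the line through the origin in direction $\vec e_1$). Let $\mathbf N=(N_i)_{i\in\mathbb{Z}}$ be i.i.d. with law $N$, and let $G_{\mathbf N}$ be the oriented graph on $\mathbb{Z}$ with bonds $\{(i,i+n): i\in\mathbb{Z},\ 1\le n\le N_i\}$. Given $p\in[0,1]$, each bond of $G_{\mathbf N}$ is open independently with probability $p$. $(0\to\infty)$ is the event that $0$ is connected by oriented open paths to infinitely many vertices, and $\theta(p,0)=P(0\to\infty)$. *)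

From HB Require Import structures.
From mathcomp Require Import all_boot all_order all_algebra.
From mathcomp Require Import all_classical all_reals all_analysis.
Set Implicit Arguments. Unset Strict Implicit. Unset Printing Implicit Defensive.
Import Order.TTheory GRing.Theory Num.Theory.
Local Open Scope classical_set_scope.
Local Open Scope ring_scope.

(* Model of one-dimensional oriented percolation with random range on Z,
   realized on a probability space (T, P):
   - Nr i : T -> nat  is the range N_i at site i;
   - Bo i k : T -> bool says whether the bond (i, i + (k+1)) is open
     (k+1 ranges over all n >= 1; only those with n <= N_i are bonds of G_N). *)

Definition pidx := (int + (int * nat))%type.

Definition pvar (T : Type) (Nr : int -> T -> nat) (Bo : int -> nat -> T -> bool)
  (j : pidx) (t : T) : nat :=
  match j with
  | inl i => Nr i t
  | inr (i, k) => nat_of_bool (Bo i k t)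
  end.

Definition discrete_mutually_independent d (T : measurableType d) (R : realType)
  (P : probability T R) (I : eqType) (X : I -> T -> nat) : Prop :=
  forall (s : seq I) (x : I -> nat), uniq s ->
    P (\bigcap_(j in [set j | j \in s]) (X j @^-1` [set x j]))
    = \big[*%E/1%E]_(j <- s) P (X j @^-1` [set x j]).

Definition open_edge (T : Type) (Nr : int -> T -> nat) (Bo : int -> nat -> T -> bool)
  (t : T) (a b : int) : Prop :=
  exists k : nat, b = a + (k.+1)%:Z /\ (k.+1 <= Nr a t)%N /\ Bo a k t.

Inductive connected (T : Type) (Nr : int -> T -> nat) (Bo : int -> nat -> T -> bool)
  (t : T) : int -> int -> Prop :=
  | conn_refl a : connected Nr Bo t a a
  | conn_step a b c : open_edge Nr Bo t a b -> connected Nr Bo t b c ->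
                      connected Nr Bo t a c.

Definition perc_event (T : Type) (Nr : int -> T -> nat) (Bo : int -> nat -> T -> bool)
  : set T :=
  [set t | infinite_set [set v : int | connected Nr Bo t 0 v]].

From Pilot Require Import Defs.
From HB Require Import structures.
From mathcomp Require Import all_boot all_order all_algebra.
From mathcomp Require Import all_classical all_reals all_analysis.
From mathcomp Require Import ring lra zify.
Import Order.TTheory GRing.Theory Num.Theory.
Local Open Scope classical_set_scope.
Local Open Scope ring_scope.
Set Implicit Arguments. Unset Strict Implicit. Unset Printing Implicit Defensive.

(* Fix K and consider the event chain K that the sites 0, ..., K-1 all
   have an open bond to their right neighbour; it has probability
   (p q_1)^K > 0, where q_m = P(N >= m) = 1 - exp(-beta/m).  If chain K
   holds and every site n > K is reached by a direct open bond from some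
   site j < n-1, then 0 is connected to every site, so 0 -> infinity.
   Hence P(0 -> infinity) >= (p q_1)^K - sum_(n > K) P(chain K, n not
   directly reached), and by independence each term of the sum is at most
   (p q_1)^K D_n with D_n = prod_(j < n-1) (1 - p q_(n-j)).  Since
   m p q_m -> p beta > 1, Raabe's test shows that sum_n D_n converges,
   so for K large its tail is below 1 and the bound is positive. *)

Section Independence.
Local Open Scope ereal_scope.
Context (d : measure_display) (T : measurableType d) (R : realType)
  (P : probability T R) (Nr : int -> T -> nat) (Bo : int -> nat -> T -> bool).
Hypothesis mNr : forall i k, measurable [set t | Nr i t = k].
Hypothesis mBo : forall i k, measurable [set t | Bo i k t].
Hypothesis indep : discrete_mutually_independent P (pvar Nr Bo).

Local Notation X := (pvar Nr Bo).

Lemma pvar_point_measurable j x : measurable (X j @^-1` [set x]).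
Proof.
case: j => [i|[i k]]; first exact: mNr.
case: x => [|[|x]].
- rewrite (_ : _ @^-1` _ = ~` [set t | Bo i k t]); first exact/measurableC/mBo.
  by apply/seteqP; split => t /=; case: (Bo i k t).
- rewrite (_ : _ @^-1` _ = [set t | Bo i k t]); first exact/mBo.
  by apply/seteqP; split => t /=; case: (Bo i k t).
- rewrite (_ : _ @^-1` _ = set0) //.
  by apply/seteqP; split => t /=; case: (Bo i k t).
Qed.

Lemma preimage_points (j : pidx) (S : set nat) :
  X j @^-1` S = \bigcup_(v in S) X j @^-1` [set v].
Proof.
by apply/seteqP; split => t /=; [move=> h; exists (X j t) | case=> v Sv ->].
Qed.

Lemma pvar_measurable j (S : set nat) : measurable (X j @^-1` S).
Proof.
by rewrite preimage_points; apply: bigcup_measurable => v _;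
  exact: pvar_point_measurable.
Qed.

Definition cylinder (s : seq pidx) (Y : pidx -> set nat) : set T :=
  [set t | forall j, j \in s -> Y j (X j t)].

Lemma cylinder_nil Y : cylinder [::] Y = setT.
Proof. by apply/seteqP; split => t //= _ j. Qed.

Lemma cylinder_cons j s Y : cylinder (j :: s) Y = X j @^-1` Y j `&` cylinder s Y.
Proof.
apply/seteqP; split => t /=.
  move=> h; split; first by apply: h; rewrite mem_head.
  by move=> i ins; apply: h; rewrite inE ins orbT.
by case=> h1 h2 i; rewrite inE => /orP[/eqP ->|]//; exact: h2.
Qed.

Lemma cylinder_measurable s Y : measurable (cylinder s Y).
Proof.
elim: s => [|j s ih]; first by rewrite cylinder_nil.
by rewrite cylinder_cons; apply: measurableI => //; exact: pvar_measurable.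
Qed.

(* Independence extends from point values to arbitrary value sets: the
   variables of t are freed one at a time, decomposing the event along the
   value of the freed variable and using sigma-additivity. *)
Lemma prob_cylinder_points (t s : seq pidx) (Y : pidx -> set nat)
    (x : pidx -> nat) : uniq (t ++ s) ->
  P (cylinder t Y `&` cylinder s (fun j => [set x j])) =
  \prod_(j <- t) P (X j @^-1` Y j) * \prod_(j <- s) P (X j @^-1` [set x j]).
Proof.
elim: t s x => [|i t ih] s x /=.
  by move=> us; rewrite cylinder_nil setTI big_nil mul1e -indep.
move=> /andP[nis us].
have ni j : j \in s -> (j == i) = false.
  by move=> js; apply/negbTE; apply: contraNneq nis => <-; rewrite mem_cat js orbT.
pose x' v := fun j => if j == i then v else x j.
have E : cylinder (i :: t) Y `&` cylinder s (fun j => [set x j]) =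
   \bigcup_(v in Y i) (cylinder t Y `&` cylinder (i :: s) (fun j => [set x' v j])).
  apply/seteqP; split => u /=.
    rewrite cylinder_cons => -[[Yi ht] hs]; exists (X i u) => //; split => //.
    rewrite cylinder_cons; split; first by rewrite /x' /= eqxx.
    by move=> j js /=; rewrite /x' ni //; exact: hs.
  case=> v Yv [ht]; rewrite cylinder_cons => -[/= Xi hs].
  rewrite cylinder_cons; split; first by split => //; rewrite /preimage /= Xi /x' eqxx.
  by move=> j js; have := hs j js; rewrite /x' /= ni.
have disj : trivIset (Y i)
    (fun v => cylinder t Y `&` cylinder (i :: s) (fun j => [set x' v j])).
  move=> v w _ _ [u [[_ h1] [_ h2]]].
  by move: h1 h2; rewrite !cylinder_cons /= /x' eqxx => -[-> _] [-> _].
rewrite E measure_bigcup //; last first.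
  by move=> v _; exact: measurableI (cylinder_measurable _ _) (cylinder_measurable _ _).
have ust : uniq (t ++ i :: s) by rewrite -cat1s uniq_catCA cat1s /= nis us.
set c1 := \prod_(j <- t) P (X j @^-1` Y j).
set c2 := \prod_(j <- s) P (X j @^-1` [set x j]).
have c12f : c1 * c2 \is a fin_num.
  by rewrite fin_numM // prode_fin_num // => j _; rewrite fin_num_measure //;
    exact: pvar_measurable.
transitivity (\sum_(v <oo | v \in Y i) ((fine (c1 * c2))%:E * P (X i @^-1` [set v]))).
  apply: eq_eseriesr => v _; rewrite [LHS](ih (i :: s) (x' v) ust) big_cons /x' eqxx.
  rewrite (@eq_big_seq _ _ _ _ s _ (fun j => P (X j @^-1` [set x j]))); last first.
    by move=> j js; rewrite ni.
  by rewrite fineK // /c1 /c2 [P _ * _]muleC muleA.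
rewrite nneseriesZl // fineK // big_cons preimage_points.
rewrite measure_bigcup //; last 2 first.
- by move=> v _; exact: pvar_point_measurable.
- by move=> v w _ _ [u [/= -> ->]].
by rewrite /c1 /c2 muleC muleA.
Qed.

Lemma prob_cylinder (s : seq pidx) (Y : pidx -> set nat) : uniq s ->
  P (cylinder s Y) = \prod_(j <- s) P (X j @^-1` Y j).
Proof.
move=> us; have := @prob_cylinder_points s [::] Y (fun _ => 0%N).
by rewrite cats0 cylinder_nil setIT big_nil mule1 => ->.
Qed.

Definition merge (a : seq pidx) (Y1 Y2 : pidx -> set nat) : pidx -> set nat :=
  fun i => if i \in a then Y1 i else Y2 i.

Lemma cylinder_cat a b Y1 Y2 : (forall i, i \in a -> i \notin b) ->
  cylinder (a ++ b) (merge a Y1 Y2) = cylinder a Y1 `&` cylinder b Y2.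
Proof.
move=> dab; apply/seteqP; split => u /=.
  move=> h; split => i ia.
    by have := h i; rewrite mem_cat ia /merge ia => /(_ isT).
  have := h i; rewrite mem_cat ia orbT /merge => /(_ isT).
  by case: ifP => // ai; move: (dab i ai); rewrite ia.
case=> h1 h2 i; rewrite mem_cat /merge => /orP[ia|ib]; first by rewrite ia; exact: h1.
by case: ifP => ia; [exact: h1 | exact: h2].
Qed.

Lemma prob_cylinder_cat a b Y1 Y2 : uniq a -> uniq b ->
  (forall i, i \in a -> i \notin b) ->
  P (cylinder a Y1 `&` cylinder b Y2) = P (cylinder a Y1) * P (cylinder b Y2).
Proof.
move=> ua ub dab; have uab : uniq (a ++ b).
  rewrite cat_uniq ua ub andbT /=; apply/hasPn => i ib; apply/negP => ia.
  by move: (dab i ia); rewrite ib.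
rewrite -cylinder_cat // prob_cylinder // big_cat /= !prob_cylinder //.
congr (_ * _); apply: eq_big_seq => i ia; rewrite /merge ?ia //.
by case: ifP => // ai; move: (dab i ai); rewrite ia.
Qed.

Section AlternativeBlocks.
Variables (c : nat -> seq pidx) (YU YV : pidx -> set nat).

Definition alt_blocks (js : seq nat) : set T :=
  [set t | forall j, j \in js -> (cylinder (c j) YU `|` cylinder (c j) YV) t].

Lemma alt_blocks_nil : alt_blocks [::] = setT.
Proof. by apply/seteqP; split => u //= _ k. Qed.

Lemma alt_blocks_cons j js :
  alt_blocks (j :: js) = (cylinder (c j) YU `|` cylinder (c j) YV) `&` alt_blocks js.
Proof.
apply/seteqP; split => u /=.
  by move=> h; split => [|k kl]; apply: h; rewrite inE ?eqxx ?kl ?orbT.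
by case=> h1 h2 k; rewrite inE => /orP[/eqP ->|]//; exact: h2.
Qed.

Lemma alt_blocks_measurable js : measurable (alt_blocks js).
Proof.
elim: js => [|k l ihl]; first by rewrite alt_blocks_nil.
rewrite alt_blocks_cons; apply: measurableI => //.
by apply: measurableU; exact: cylinder_measurable.
Qed.

Lemma prob_alt_blocks_cylinder (js : seq nat) (r : seq pidx) (YR : pidx -> set nat) :
  uniq js -> (forall j, j \in js -> uniq (c j)) ->
  (forall j j' i, j \in js -> j' \in js -> i \in c j -> i \in c j' -> j = j') ->
  uniq r -> (forall j i, j \in js -> i \in c j -> i \notin r) ->
  (forall j, j \in js -> cylinder (c j) YU `&` cylinder (c j) YV = set0) ->
  P (alt_blocks js `&` cylinder r YR) =
  \prod_(j <- js) (P (cylinder (c j) YU) + P (cylinder (c j) YV)) * P (cylinder r YR).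
Proof.
elim: js r YR => [|j js ih] r YR ujs uc dc ur dr dUV.
  by rewrite big_nil mul1e alt_blocks_nil setTI.
move: ujs => /= /andP[njs ujs].
have jj : j \in j :: js by rewrite mem_head.
have jl k : k \in js -> k \in j :: js by move=> kjs; rewrite inE kjs orbT.
have dj i : i \in c j -> i \notin r by apply: dr.
have dr' k i : k \in js -> i \in c k -> i \notin c j ++ r.
  move=> kjs ick; rewrite mem_cat negb_or; apply/andP; split.
    apply/negP => icj; have kj := dc _ _ _ (jl _ kjs) jj ick icj.
    by move: kjs; rewrite kj (negbTE njs).
  exact: (dr k _ (jl _ kjs)).
have ucr : uniq (c j ++ r).
  rewrite cat_uniq (uc _ jj) ur andbT /=; apply/hasPn => i ir; apply/negP => ic.
  by move: (dj i ic); rewrite ir.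
have IH Y : P (alt_blocks js `&` cylinder (c j ++ r) (merge (c j) Y YR)) =
    \prod_(k <- js) (P (cylinder (c k) YU) + P (cylinder (c k) YV)) *
    (P (cylinder (c j) Y) * P (cylinder r YR)).
  rewrite ih //; first by rewrite cylinder_cat // prob_cylinder_cat ?(uc _ jj).
  - by move=> k /jl; exact: uc.
  - by move=> k k' i /jl h /jl h'; exact: dc.
  - by move=> k /jl; exact: dUV.
have E : alt_blocks (j :: js) `&` cylinder r YR =
    (alt_blocks js `&` cylinder (c j ++ r) (merge (c j) YU YR)) `|`
    (alt_blocks js `&` cylinder (c j ++ r) (merge (c j) YV YR)).
  rewrite alt_blocks_cons !cylinder_cat //; apply/seteqP; split => u /=.
    by case=> -[[hu|hv] h] hr; [left|right].
  by case=> -[h [hj hr]]; (split => //; split => //); [left|right].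
have -> : P (alt_blocks (j :: js) `&` cylinder r YR) =
    P (alt_blocks js `&` cylinder (c j ++ r) (merge (c j) YU YR)) +
    P (alt_blocks js `&` cylinder (c j ++ r) (merge (c j) YV YR)).
  rewrite E measureU //; last first.
  - apply/seteqP; split => // u /= [[_ h1] [_ h2]].
    rewrite !(cylinder_cat _ _ dj) in h1 h2.
    have : (cylinder (c j) YU `&` cylinder (c j) YV) u by split; [case: h1 | case: h2].
    by rewrite dUV.
  - by apply: measurableI; [exact: alt_blocks_measurable | exact: cylinder_measurable].
  - by apply: measurableI; [exact: alt_blocks_measurable | exact: cylinder_measurable].
rewrite !IH big_cons -ge0_muleDr ?mule_ge0 // -ge0_muleDl //.
by rewrite muleA [_ * (_ + _)]muleC.
Qed.

Lemma prob_alt_blocks (js : seq nat) :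
  uniq js -> (forall j, j \in js -> uniq (c j)) ->
  (forall j j' i, j \in js -> j' \in js -> i \in c j -> i \in c j' -> j = j') ->
  (forall j, j \in js -> cylinder (c j) YU `&` cylinder (c j) YV = set0) ->
  P (alt_blocks js) = \prod_(j <- js) (P (cylinder (c j) YU) + P (cylinder (c j) YV)).
Proof.
move=> ujs uc dc dUV; have := @prob_alt_blocks_cylinder js [::] YU ujs uc dc isT.
by rewrite cylinder_nil setIT probability_setT mule1 => ->.
Qed.

End AlternativeBlocks.
End Independence.

Lemma bounded_series_tail_lt1 (R : realType) (u : nat -> R) (B : R) :
  (forall n, 0 <= u n) -> (forall N, \sum_(0 <= n < N) u n <= B) ->
  exists K : nat, (\sum_(K.+1 <= n <oo) (u n)%:E < 1)%E.
Proof.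
move=> u0 uB.
have g0 n : (0 <= (u n)%:E)%E by rewrite lee_fin.
have fin : (\sum_(0 <= n <oo) (u n)%:E < +oo)%E.
  apply: (@le_lt_trans _ _ B%:E); last exact: ltry.
  apply: lime_le; first exact: is_cvg_ereal_nneg_natsum.
  by near=> N; rewrite sumEFin lee_fin.
have tail_cvg := nneseries_tail_cvg fin (fun k _ => g0 k).
have [N _ hN] : \forall N \near \oo, fine (\sum_(N <= k <oo) (u k)%:E) < 1.
  exact: cvgr_lt (fine_cvg tail_cvg) _ _.
exists N; have := hN N.+1 (leqnSn N) => /= h.
have tail_fin : (\sum_(N.+1 <= k <oo) (u k)%:E)%E \is a fin_num.
  rewrite ge0_fin_numE; last by apply: nneseries_ge0 => k _.
  apply: le_lt_trans fin.
  by rewrite (nneseries_split 0 N.+1) // add0n leeDr // sume_ge0.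
by rewrite -(fineK tail_fin) lte_fin.
Unshelve. all: by end_near.
Qed.

Section Raabe.
Variables (R : realType) (u : nat -> R) (c : R) (K0 : nat).
Hypotheses (u_ge0 : forall n, 0 <= u n) (c_gt0 : 0 < c)
  (raabe : forall n, (K0 <= n)%N -> n.+1%:R * u n.+1 <= (n%:R - c) * u n).

(* The quantity n u_n + c (u_K0 + ... + u_(n-1)) decreases from rank K0. *)
Lemma raabe_telescope M :
  c * \sum_(K0 <= n < K0 + M) u n + (K0 + M)%:R * u (K0 + M) <= K0%:R * u K0.
Proof.
elim: M => [|M ih]; first by rewrite addn0 big_geq // mulr0 add0r.
apply: le_trans ih; rewrite addnS big_nat_recr ?leq_addr //=.
have := raabe (leq_addr M K0); lra.
Qed.

Lemma raabe_partial_sums N :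
  \sum_(0 <= n < N) u n <= \sum_(0 <= n < K0) u n + K0%:R * u K0 / c.
Proof.
apply: (@le_trans _ _ (\sum_(0 <= n < K0 + N) u n)).
  rewrite [X in _ <= X](big_cat_nat (n := N)) ?leq_addl //= lerDl.
  by apply: sumr_ge0 => i _.
rewrite (big_cat_nat (n := K0)) ?leq_addr //= lerD2l ler_pdivlMr // mulrC.
apply: le_trans (raabe_telescope N); rewrite lerDl mulr_ge0 //.
Qed.

Lemma raabe_tail_lt1 : exists K : nat, (\sum_(K.+1 <= n <oo) (u n)%:E < 1)%E.
Proof. exact: bounded_series_tail_lt1 u_ge0 raabe_partial_sums. Qed.

End Raabe.

Section NoDirectBond.
Variables (R : realType) (beta p : R).
Hypotheses (beta_gt0 : 0 < beta) (p_gt0 : 0 < p) (p_lt1 : p < 1)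
  (beta_large : p^-1 < beta).

Definition range_tail (m : nat) : R := 1 - expR (- (beta / m%:R)).

(* probability that a given site has an open bond of length m *)
Definition bond_prob (m : nat) : R := p * range_tail m.

(* probability that no site j < n-1 has an open bond of length n - j *)
Definition no_direct_bond (n : nat) : R :=
  \prod_(0 <= j < n.-1) (1 - bond_prob (n - j)).

Lemma range_tail_ge0 m : 0 <= range_tail m.
Proof.
by rewrite subr_ge0 expR_le1 oppr_le0 divr_ge0 // ltW.
Qed.

Lemma range_tail_le1 m : range_tail m <= 1.
Proof. by rewrite lerBlDr lerDl expR_ge0. Qed.

(* 1 - exp(-x) >= x / (1 + x) at x = beta / m *)
Lemma range_tail_lb m : (0 < m)%N -> beta / (m%:R + beta) <= range_tail m.
Proof.
move=> m0; have mp : (0 : R) < m%:R by rewrite ltr0n.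
set x := beta / m%:R; have xp : 0 < x by apply: divr_gt0.
have exp_le : expR (- x) <= (1 + x)^-1.
  rewrite expRN lef_pV2 ?posrE ?expR_gt0 ?addr_gt0 //; exact: expR_ge1Dx.
have -> : beta / (m%:R + beta) = 1 - (1 + x)^-1.
  by rewrite /x; field; rewrite (lt0r_neq0 mp) lt0r_neq0 // addr_gt0.
by rewrite /range_tail lerD2l lerN2.
Qed.

Lemma bond_prob_le1 m : bond_prob m <= 1.
Proof.
have := range_tail_le1 m; have := range_tail_ge0 m.
have := p_gt0; have := p_lt1; rewrite /bond_prob; nra.
Qed.

Lemma no_direct_bond_ge0 n : 0 <= no_direct_bond n.
Proof.
by apply: prodr_ge0 => j _; rewrite subr_ge0 bond_prob_le1.
Qed.

Lemma no_direct_bond_rec n : (1 <= n)%N ->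
  no_direct_bond n.+1 = (1 - bond_prob n.+1) * no_direct_bond n.
Proof. by case: n => // n _; rewrite /no_direct_bond /= big_nat_recl // subn0. Qed.

Definition slack : R := (p * beta - 1) / 2.

Lemma slack_gt0 : 0 < slack.
Proof.
have pb : 1 < p * beta.
  have h := beta_large; rewrite -(ltr_pM2l p_gt0) mulfV in h => //.
  exact: lt0r_neq0.
by rewrite /slack divr_gt0 // subr_gt0.
Qed.

(* Since m * bond_prob m -> p * beta > 1, eventually m * bond_prob m >= 1 + slack. *)
Lemma bond_prob_eventually_large : exists M0 : nat, (1 <= M0)%N /\
  forall n : nat, (M0 <= n)%N -> 1 + slack <= n.+1%:R * bond_prob n.+1.
Proof.
exists (Num.truncn ((1 + slack) * beta / slack)).+1; split => // n hn.
set m : R := n.+1%:R; have mp : 0 < m by rewrite ltr0n.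
have sp := slack_gt0.
have hm : (1 + slack) * beta < m * slack.
  rewrite -ltr_pdivrMr //; apply: (lt_le_trans (truncnS_gt _)).
  by rewrite /m ler_nat (leq_trans hn).
apply: (@le_trans _ _ (m * (p * (beta / (m + beta))))).
  rewrite mulrA mulrA ler_pdivlMr ?addr_gt0 //.
  have e : m * p * beta = m * (1 + 2 * slack) by rewrite /slack; field.
  rewrite e; nra.
rewrite /bond_prob ler_wpM2l ?(ltW mp) // ler_wpM2l ?(ltW p_gt0) //.
exact: range_tail_lb.
Qed.

Lemma no_direct_bond_tail_lt1 :
  exists K : nat, (\sum_(K.+1 <= n <oo) (no_direct_bond n)%:E < 1)%E.
Proof.
have [M0 [M0_ge1 large]] := bond_prob_eventually_large.
apply: (@raabe_tail_lt1 _ _ _ M0 no_direct_bond_ge0 slack_gt0) => n Mn.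
rewrite no_direct_bond_rec ?(leq_trans M0_ge1) // mulrA.
apply: ler_wpM2r; first exact: no_direct_bond_ge0.
have := large n Mn; rewrite -addn1 natrD; lra.
Qed.

End NoDirectBond.

Lemma infinite_nonneg_iff (S : set int) : (forall v, S v -> 0 <= v) ->
  infinite_set S <-> forall M : nat, exists v : nat, (M <= v)%N /\ S v%:Z.
Proof.
move=> S0; split.
  move=> iS M; apply: contrapT => hno; apply: iS.
  apply: (@sub_finite_set _ _ (Posz @` `I_M)); last exact/finite_image/finite_II.
  move=> x Sx; have := S0 x Sx; case: x Sx => // v Sv _.
  exists v => //=; rewrite /= ltnNge; apply/negP => Mv; apply: hno; by exists v.
move=> hM fS.
pose B := (\max_(y <- finmap.enum_fset (fset_set S)) `|y|%N)%N.
have [v [Bv Sv]] := hM B.+1.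
have : (`|v%:Z|%N <= B)%N.
  apply: leq_bigmax_seq => //; have := in_fset_set fS v%:Z.
  by rewrite (mem_set Sv).
by rewrite absz_nat leqNgt Bv.
Qed.

Local Notation conn := Pilot.Defs.connected.

Section Paths.
Context (T : Type) (Nr : int -> T -> nat) (Bo : int -> nat -> T -> bool) (t : T).

Lemma open_edge_lt a b : open_edge Nr Bo t a b -> a < b.
Proof. by case=> k [-> _]; rewrite ltrDl. Qed.

Lemma conn_le a b : conn Nr Bo t a b -> a <= b.
Proof. by elim=> // x y z /open_edge_lt xy _ yz; exact: le_trans (ltW xy) yz. Qed.

Lemma conn_snoc a b c : conn Nr Bo t a b -> open_edge Nr Bo t b c ->
  conn Nr Bo t a c.
Proof.
elim=> [x|x y z exy _ ih] e; first exact: conn_step e (conn_refl _ _ _ _).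
exact: conn_step exy (ih e).
Qed.

Lemma conn_last a c : conn Nr Bo t a c ->
  a = c \/ exists b, conn Nr Bo t a b /\ open_edge Nr Bo t b c.
Proof.
elim=> [x|x y z exy cyz [<-|[b [cyb ebz]]]]; first by left.
  by right; exists x; split => //; exact: conn_refl.
by right; exists b; split => //; exact: conn_step exy cyb.
Qed.

Lemma perc_event_iff : perc_event Nr Bo t <->
  forall M : nat, exists v : nat, (M <= v)%N /\ conn Nr Bo t 0 v%:Z.
Proof. by apply: infinite_nonneg_iff => v; exact: conn_le. Qed.

End Paths.

Section Measurability.
Context (d : measure_display) (T : measurableType d)
  (Nr : int -> T -> nat) (Bo : int -> nat -> T -> bool).
Hypothesis mNr : forall i k, measurable [set t | Nr i t = k].
Hypothesis mBo : forall i k, measurable [set t | Bo i k t].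

Lemma range_ge_measurable i L : measurable [set t | (L <= Nr i t)%N].
Proof.
rewrite (_ : [set t | _] = \bigcup_(m in [set m | (L <= m)%N]) [set t | Nr i t = m]).
  by apply: bigcup_measurable => m _; exact: mNr.
by apply/seteqP; split => t /=; [move=> h; exists (Nr i t) | case=> m hm ->].
Qed.

Lemma open_edge_measurable a b : measurable [set t | open_edge Nr Bo t a b].
Proof.
rewrite (_ : [set t | _] = \bigcup_(k in [set k : nat | b = a + k.+1%:Z])
   ([set t | (k.+1 <= Nr a t)%N] `&` [set t | Bo a k t])).
  by apply: bigcup_measurable => k _; apply: measurableI;
    [exact: range_ge_measurable | exact: mBo].
by apply/seteqP; split => t /= [k]; [case=> h1 [h2 h3] | move=> h1 [h2 h3]]; exists k.
Qed.

Definition reaches (v : nat) : set T := [set t | conn Nr Bo t 0 v%:Z].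

Lemma reaches_measurable v : measurable (reaches v).
Proof.
elim/ltn_ind: v => -[_|w ih].
  by rewrite (_ : reaches 0 = setT) //; apply/seteqP; split => t // _; exact: conn_refl.
rewrite (_ : reaches w.+1 = \bigcup_(j in [set j | (j < w.+1)%N])
    (reaches j `&` [set t | open_edge Nr Bo t j%:Z w.+1%:Z])).
  apply: bigcup_measurable => j jw; apply: measurableI; last exact: open_edge_measurable.
  exact: ih.
apply/seteqP; split => t /=; last by case=> j _ [cj ej]; exact: conn_snoc cj ej.
move=> hc; have [/eqP //|[b [cb eb]]] := conn_last hc.
have b0 := conn_le cb; have bw := open_edge_lt eb.
case: b b0 cb eb bw => // j _ cb eb bw.
by exists j => //; rewrite /= -ltz_nat.
Qed.

Lemma perc_event_measurable : measurable (perc_event Nr Bo).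
Proof.
rewrite (_ : perc_event Nr Bo =
    \bigcap_(M in [set: nat]) \bigcup_(v in [set v | (M <= v)%N]) reaches v).
  apply: bigcap_measurableType => M _.
  by apply: bigcup_measurable => v _; exact: reaches_measurable.
apply/seteqP; split => t /=.
  by move=> /perc_event_iff h M _; have [v [Mv cv]] := h M; exists v.
by move=> h; apply/perc_event_iff => M; have [v Mv cv] := h M I; exists v.
Qed.

End Measurability.


Section GoodEvents.
Context (d : measure_display) (T : measurableType d)
  (Nr : int -> T -> nat) (Bo : int -> nat -> T -> bool).

Definition chain (K : nat) : set T :=
  [set t | forall j : nat, (j < K)%N -> (1 <= Nr j t)%N /\ Bo j 0%N t].

Definition direct_bond (n : nat) : set T :=
  [set t | exists j : nat,
     (j < n.-1)%N /\ (n - j <= Nr j t)%N /\ Bo j (n - j - 1)%N t].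

Definition chain_block (j : nat) : seq pidx := [:: inl (Posz j); inr (Posz j, 0%N)].

Definition chain_pattern : pidx -> set nat := fun i =>
  match i with inl _ => [set m | (1 <= m)%N] | inr _ => [set 1%N] end.

Definition site_block (n j : nat) : seq pidx :=
  [:: inl (Posz j); inr (Posz j, 0%N); inr (Posz j, (n - j - 1)%N)].

(* constraints that chain K puts on the range and first bond of site j *)
Definition chain_range_min (K j : nat) : nat := if (j < K)%N then 1%N else 0%N.
Definition chain_bond_values (K j : nat) : set nat :=
  if (j < K)%N then [set 1%N] else setT.

(* site j does not reach n because its range is too short ... *)
Definition short_pattern (K n : nat) : pidx -> set nat := fun i =>
  match i with
  | inl (Posz j) => [set m | (chain_range_min K j <= m)%N && (m < n - j)%N]
  | inr (Posz j, k) => if k == 0%N then chain_bond_values K j else setT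
  | _ => setT
  end.

(* ... or because its bond to n is closed *)
Definition closed_pattern (K n : nat) : pidx -> set nat := fun i =>
  match i with
  | inl (Posz j) => [set m | (n - j <= m)%N]
  | inr (Posz j, k) => if k == 0%N then chain_bond_values K j else [set 0%N]
  | _ => setT
  end.

Definition pidx_site (i : pidx) : int := match i with inl s => s | inr (s, _) => s end.

Lemma chain_block_site j i : i \in chain_block j -> pidx_site i = j.
Proof. by rewrite !inE => /orP[] /eqP ->. Qed.

Lemma site_block_site n j i : i \in site_block n j -> pidx_site i = j.
Proof. by rewrite !inE => /or3P[] /eqP ->. Qed.

Lemma cylinder2 (a b : pidx) Y t : cylinder Nr Bo [:: a; b] Y t <->
  Y a (pvar Nr Bo a t) /\ Y b (pvar Nr Bo b t).
Proof.
split => [h|[h1 h2] i]; first by split; apply: h; rewrite !inE eqxx ?orbT.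
by rewrite !inE => /orP[/eqP->|/eqP->].
Qed.

Lemma cylinder3 (a b c : pidx) Y t : cylinder Nr Bo [:: a; b; c] Y t <->
  Y a (pvar Nr Bo a t) /\ Y b (pvar Nr Bo b t) /\ Y c (pvar Nr Bo c t).
Proof.
split => [h|[h1 [h2 h3]] i]; first by split; [|split]; apply: h; rewrite !inE eqxx ?orbT.
by rewrite !inE => /orP[/eqP->|/orP[/eqP->|/eqP->]].
Qed.

Lemma chain_as_blocks K :
  chain K = alt_blocks Nr Bo chain_block chain_pattern (fun _ => set0) (iota 0 K).
Proof.
apply/seteqP; split => t /=.
  move=> h j; rewrite mem_iota add0n => /andP[_ jK]; left.
  by apply/cylinder2; have [h1 h2] := h j jK; split => //=; rewrite h2.
move=> h j jK; have := h j; rewrite mem_iota add0n jK => /(_ isT) [|].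
  by move/cylinder2 => /= [h1]; case: (Bo j 0%N t).
by move/cylinder2 => [].
Qed.

Lemma site_bond_nonzero n j : (j < n.-1)%N -> (n - j - 1 == 0)%N = false.
Proof. by move=> jn; apply/negbTE; lia. Qed.

Lemma chain_no_direct_bond_as_blocks K n : (K < n)%N ->
  chain K `&` ~` direct_bond n =
  alt_blocks Nr Bo (site_block n) (short_pattern K n) (closed_pattern K n) (iota 0 n.-1).
Proof.
move=> Kn; apply/seteqP; split => t /=.
  case=> hE hA j; rewrite mem_iota add0n => /andP[_ jn].
  have k0 := site_bond_nonzero jn.
  have h0 : chain_bond_values K j (pvar Nr Bo (inr (Posz j, 0%N)) t).
    rewrite /chain_bond_values; case: ifP => // jK.
    by have [_ hb] := hE j jK; rewrite /= hb.
  case: (leqP (n - j) (Nr j t)) => hN.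
    right; apply/cylinder3; rewrite /= k0; split => //; split => //.
    case hb: (Bo j (n - j - 1)%N t) => //; exfalso; apply: hA; by exists j.
  left; apply/cylinder3; rewrite /= k0; split => //; rewrite hN andbT /chain_range_min.
  by case: ifP => // jK; have [] := hE j jK.
move=> h; split.
  move=> j jK; have jn : (j < n.-1)%N by lia.
  have := h j; rewrite mem_iota add0n jn => /(_ isT) [/cylinder3|/cylinder3] /=;
    rewrite /chain_bond_values /chain_range_min jK.
    by case=> /andP[h1 _] [h2 _]; split; [|case: (Bo j 0%N t) h2].
  case=> h1 [h2 _]; split; last by case: (Bo j 0%N t) h2.
  by apply: leq_trans h1; lia.
case=> j [jn [hN hB]].
have := h j; rewrite mem_iota add0n jn => /(_ isT) [/cylinder3|/cylinder3] /=;
  rewrite site_bond_nonzero //.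
  by case=> /andP[_]; rewrite ltnNge hN.
by case=> _ [_]; rewrite hB.
Qed.

Lemma chain_direct_bonds_percolate K t : chain K t ->
  (forall n, (K < n)%N -> direct_bond n t) -> perc_event Nr Bo t.
Proof.
move=> hE hA.
have hc (v : nat) : conn Nr Bo t 0 v%:Z.
  elim/ltn_ind: v => -[_|v ih]; first exact: conn_refl.
  case: (ltnP v K) => vK.
    apply: (conn_snoc (ih v (ltnSn v))); have [h1 h2] := hE v vK.
    by exists 0%N; split; [rewrite -addn1 PoszD | split].
  have [j [jv [hNj hB]]] := hA v.+1 vK.
  apply: (conn_snoc (ih j (ltnW jv))).
  have e1 : (v.+1 - j = (v - j).+1)%N by rewrite subSn // ltnW.
  exists (v - j)%N; split; last by rewrite -e1; split => //; move: hB; rewrite e1 subn1.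
  by rewrite -PoszD addnS subnKC // ltnW.
by apply/perc_event_iff => M; exists M; split.
Qed.

End GoodEvents.

Section Estimates.
Local Open Scope ereal_scope.
Context (d : measure_display) (T : measurableType d) (R : realType)
  (P : probability T R) (beta p : R)
  (Nr : int -> T -> nat) (Bo : int -> nat -> T -> bool).
Hypotheses (beta_gt0 : (0 < beta)%R) (p_gt0 : (0 < p)%R) (p_lt1 : (p < 1)%R)
  (mNr : forall i k, measurable [set t | Nr i t = k])
  (mBo : forall i k, measurable [set t | Bo i k t])
  (lawN : forall i (n : nat), (1 <= n)%N ->
     P [set t | (n <= Nr i t)%N] = (1 - expR (- (beta / n%:R)))%:E)
  (lawB : forall i k, P [set t | Bo i k t] = p%:E)
  (indep : discrete_mutually_independent P (pvar Nr Bo))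
  (beta_large : (p^-1 < beta)%R).

Local Notation X := (pvar Nr Bo).
Local Notation rt := (range_tail beta).
Local Notation bp := (bond_prob beta p).

Lemma prob_pvar_setT j : P (X j @^-1` setT) = 1.
Proof. by rewrite preimage_setT probability_setT. Qed.

Lemma prob_bond_open i k : P (X (inr (i, k)) @^-1` [set 1%N]) = p%:E.
Proof.
by rewrite -(lawB i k); congr (P _); apply/seteqP; split => t /=; case: (Bo i k t).
Qed.

Lemma prob_bond_closed i k : P (X (inr (i, k)) @^-1` [set 0%N]) = (1 - p)%:E.
Proof.
rewrite (_ : _ @^-1` _ = ~` [set t | Bo i k t]); last first.
  by apply/seteqP; split => t /=; case: (Bo i k t).
by rewrite probability_setC // lawB EFinB.
Qed.

Lemma prob_chain_bond_values K j :
  P (X (inr (Posz j, 0%N)) @^-1` chain_bond_values K j) = (if (j < K)%N then p else 1)%:E.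
Proof.
by rewrite /chain_bond_values; case: ifP => _; [exact: prob_bond_open | exact: prob_pvar_setT].
Qed.

Lemma prob_range_ge j L : (1 <= L)%N ->
  P (X (inl (Posz j)) @^-1` [set m | (L <= m)%N]) = (rt L)%:E.
Proof. exact: lawN. Qed.

Lemma prob_range_between K j L : (1 <= L)%N ->
  P (X (inl (Posz j)) @^-1` [set m | (chain_range_min K j <= m)%N && (m < L)%N]) =
  ((if (j < K)%N then rt 1 else 1) - rt L)%:E.
Proof.
move=> L1; set lo := chain_range_min K j.
have lo_prob : P (X (inl (Posz j)) @^-1` [set m | (lo <= m)%N]) =
    (if (j < K)%N then rt 1 else 1)%:E.
  rewrite /lo /chain_range_min; case: ifP => _; first exact: prob_range_ge.
  by rewrite -(prob_pvar_setT (inl (Posz j))); congr (P _); apply/seteqP; split.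
have split_at_L : P (X (inl (Posz j)) @^-1` [set m | (lo <= m)%N && (m < L)%N]) +
    P (X (inl (Posz j)) @^-1` [set m | (L <= m)%N]) =
    P (X (inl (Posz j)) @^-1` [set m | (lo <= m)%N]).
  rewrite -measureU; first last.
  - by apply/seteqP; split => t //= [/andP[_]]; rewrite ltnNge => /negbTE ->.
  - exact: pvar_measurable.
  - exact: pvar_measurable.
  have lo_L : (lo <= L)%N by rewrite /lo /chain_range_min; case: ifP.
  congr (P _); apply/seteqP; split => t /=; first by case=> [/andP[]//|]; exact: leq_trans.
  by move=> h; case: (ltnP (Nr j t) L) => hl; [left; rewrite h | right].
by rewrite EFinB -lo_prob -split_at_L prob_range_ge // addeK.
Qed.

Lemma prob_site K n j : (j < n.-1)%N ->
  P (cylinder Nr Bo (site_block n j) (short_pattern K n)) +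
  P (cylinder Nr Bo (site_block n j) (closed_pattern K n)) =
  (if (j < K)%N then p * (rt 1 - bp (n - j)) else 1 - bp (n - j))%:E.
Proof.
move=> jn; have k0 := site_bond_nonzero jn.
have ub : uniq (site_block n j).
  by rewrite /site_block /= !inE /= andbT; apply/negP => /eqP [] /esym /eqP; rewrite k0.
rewrite !prob_cylinder // !big_cons !big_nil !mule1 /= k0.
rewrite prob_chain_bond_values prob_pvar_setT prob_bond_closed.
rewrite prob_range_between ?prob_range_ge; try lia.
rewrite -!EFinM -EFinD; congr EFin; rewrite /bond_prob; case: ifP => _; ring.
Qed.

Lemma site_prob_le K j L : (0 <= rt L)%R ->
  ((if (j < K)%N then p * (rt 1 - bp L) else 1 - bp L) <=
   (if (j < K)%N then p * rt 1 else 1) * (1 - bp L))%R.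
Proof.
move=> rtL0; case: ifP => _; last by rewrite mul1r.
have := range_tail_le1 beta 1; rewrite /bond_prob.
have p0 := ltW p_gt0; have h : (0 <= p * p * rt L)%R by rewrite !mulr_ge0.
nra.
Qed.

Lemma prod_first_K (c : R) K m : (K <= m)%N ->
  (\prod_(0 <= j < m) (if (j < K)%N then c else 1) = c ^+ K)%R.
Proof.
move=> Km; rewrite (big_cat_nat (n := K)) //=.
rewrite (eq_big_nat _ _ (F2 := fun _ => c)); last by move=> i /andP[_ ->].
rewrite prodr_const_nat subn0 big1_seq ?mulr1 // => i.
by move=> /andP[_]; rewrite mem_index_iota => /andP[Ki _]; rewrite ltnNge Ki.
Qed.

Lemma prob_chain K : P (chain Nr Bo K) = ((p * rt 1) ^+ K)%:E.
Proof.
rewrite chain_as_blocks prob_alt_blocks //; first last.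
- move=> j _; apply/seteqP; split => t // [_ /cylinder2 [] []].
- by move=> j j' i _ _ /chain_block_site hj /chain_block_site; rewrite hj => -[].
- exact: iota_uniq.
rewrite (eq_bigr (fun _ => (p * rt 1)%:E)); last first.
  move=> j _; rewrite !prob_cylinder // !big_cons !big_nil !mule1 preimage_set0.
  by rewrite measure0 mul0e adde0 /= prob_range_ge // prob_bond_open -EFinM mulrC.
by rewrite prodEFin /index_iota -{1}(subn0 K) prodr_const_nat subn0.
Qed.

Lemma prob_chain_no_direct_bond K n : (K < n)%N ->
  P (chain Nr Bo K `&` ~` direct_bond Nr Bo n) <=
  ((p * rt 1) ^+ K * no_direct_bond beta p n)%:E.
Proof.
move=> Kn; rewrite chain_no_direct_bond_as_blocks // prob_alt_blocks //; first last.
- move=> j; rewrite mem_iota add0n => /andP[_ jn]; apply/seteqP; split => t //.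
  case=> /cylinder3 [h1 _] /cylinder3 [h2 _]; move: h1 h2 => /= /andP[_].
  by rewrite ltnNge => /negbTE ->.
- by move=> j j' i _ _ /site_block_site hj /site_block_site; rewrite hj => -[].
- move=> j; rewrite mem_iota add0n => /andP[_ jn]; have k0 := site_bond_nonzero jn.
  by rewrite /site_block /= !inE /= andbT; apply/negP => /eqP [] /esym /eqP; rewrite k0.
- exact: iota_uniq.
have in_sites j : j \in iota 0 n.-1 -> (j < n.-1)%N by rewrite mem_iota.
rewrite big_seq; under eq_bigr => j /in_sites jn do rewrite prob_site //.
rewrite -big_seq prodEFin lee_fin /no_direct_bond -(@prod_first_K _ K n.-1); last by lia.
rewrite -big_split /= /index_iota subn0 big_seq [leRHS]big_seq.
apply: ler_prod => j; rewrite mem_iota add0n => /andP[_ jn]; apply/andP; split.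
  by rewrite -lee_fin -prob_site // adde_ge0.
by apply: site_prob_le; exact: range_tail_ge0.
Qed.

Definition chain_failure (K n : nat) : set T :=
  if (K < n)%N then chain Nr Bo K `&` ~` direct_bond Nr Bo n else set0.

Lemma chain_failure_measurable K n : measurable (chain_failure K n).
Proof.
rewrite /chain_failure; case: ifP => // Kn.
by rewrite chain_no_direct_bond_as_blocks //; exact: alt_blocks_measurable.
Qed.

Lemma chain_covered K :
  chain Nr Bo K `<=` perc_event Nr Bo `|` \bigcup_n chain_failure K n.
Proof.
move=> t hK; have [|] := pselect (exists2 n, (K < n)%N & ~ direct_bond Nr Bo n t).
  by case=> n Kn hn; right; exists n => //; rewrite /chain_failure Kn.
move=> hA; left; apply: (chain_direct_bonds_percolate hK) => n Kn.
by apply: contrapT => hn; apply: hA; exists n.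
Qed.

Lemma prob_chain_le_perc K :
  P (chain Nr Bo K) <= P (perc_event Nr Bo) + \sum_(n <oo) P (chain_failure K n).
Proof.
have mU : measurable (\bigcup_n chain_failure K n).
  by apply: bigcupT_measurable => n; exact: chain_failure_measurable.
have mP := perc_event_measurable mNr mBo.
apply: (@le_trans _ _ (P (perc_event Nr Bo `|` \bigcup_n chain_failure K n))).
  apply: le_measure; rewrite ?inE; last exact: chain_covered.
  - by rewrite chain_as_blocks; exact: alt_blocks_measurable.
  - exact: measurableU.
apply: le_trans (measureU2 _ mP mU) _.
by rewrite leeD2l // measure_sigma_subadditive //; exact: chain_failure_measurable.
Qed.

Lemma prob_chain_failures_le K :
  \sum_(n <oo) P (chain_failure K n) <=
  ((p * rt 1) ^+ K)%:E * \sum_(K.+1 <= n <oo) (no_direct_bond beta p n)%:E.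
Proof.
rewrite (nneseries_split 0 K.+1) // add0n big1_seq ?add0e; last first.
  move=> i /andP[_]; rewrite mem_index_iota => /andP[_ iK].
  by rewrite /chain_failure ltnNge -ltnS iK /= measure0.
rewrite -nneseriesZl; last by move=> i _; rewrite lee_fin no_direct_bond_ge0.
apply: lee_nneseries => // n _; rewrite /chain_failure; case: ifP => Kn.
  by rewrite -EFinM; exact: prob_chain_no_direct_bond.
by rewrite measure0 -EFinM lee_fin mulr_ge0 ?no_direct_bond_ge0 // exprn_ge0 //
  mulr_ge0 ?range_tail_ge0 // ltW.
Qed.

(* Choosing K so that the tail of the no_direct_bond series is below 1,
   the failures cost strictly less than P(chain K) > 0. *)
Lemma perc_prob_pos : 0 < P (perc_event Nr Bo).
Proof.
have [K tail_lt1] := no_direct_bond_tail_lt1 beta_gt0 p_gt0 p_lt1 beta_large.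
set e := ((p * rt 1) ^+ K)%R.
have e_gt0 : (0 < e)%R.
  rewrite exprn_gt0 // mulr_gt0 //; apply: lt_le_trans (range_tail_lb _ _) => //.
  by rewrite divr_gt0 // addr_gt0.
have failures_lt : \sum_(n <oo) P (chain_failure K n) < e%:E.
  apply: le_lt_trans (prob_chain_failures_le K) _.
  by rewrite -[ltRHS]mule1 lte_pmul2l.
rewrite lt_neqAle measure_ge0 andbT; apply/eqP => perc0.
have := prob_chain_le_perc K; rewrite prob_chain -perc0 add0e => chain_le.
by have := le_lt_trans chain_le failures_lt; rewrite ltxx.
Qed.

End Estimates.

Unset Implicit Arguments. Set Strict Implicit. Set Printing Implicit Defensive.

Theorem theorem6 (d : measure_display) (T : measurableType d) (R : realType)
  (P : probability T R) (beta p : R)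
  (Nr : int -> T -> nat) (Bo : int -> nat -> T -> bool) :
  0 < beta -> 0 < p -> p < 1 ->
  (forall i k, measurable [set t | Nr i t = k]) ->
  (forall i k, measurable [set t | Bo i k t]) ->
  (* N_i has law N: P(N >= n) = 1 - exp(-beta/n) for n >= 1 *)
  (forall i (n : nat), (1 <= n)%N ->
     P [set t | (n <= Nr i t)%N] = (1 - expR (- (beta / n%:R)))%:E) ->
  (* each bond is open with probability p *)
  (forall i k, P [set t | Bo i k t] = p%:E) ->
  (* all ranges and bond states are mutually independent *)
  discrete_mutually_independent P (pvar Nr Bo) ->
  p^-1 < beta ->
  measurable (perc_event Nr Bo) /\ (0 < P (perc_event Nr Bo))%E.
Proof.
move=> beta_gt0 p_gt0 p_lt1 mNr mBo lawN lawB indep beta_large.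
split; first exact: perc_event_measurable.
exact: (perc_prob_pos beta_gt0 p_gt0 p_lt1 mNr mBo lawN lawB indep beta_large).
Qed.
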